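(* Let $I$ be the edge graph of the regular icosahedron and $C$ the edge graph of the cube, both viewed as metric graphs with every edge of length $1$. There is no isometric covering $m:I\to C$.
   Context: A metric graph is viewed as a metric space in which each edge is a segment of its length, glued at the vertices. An isometric covering of $Y$ by $X$ is a surjective map $m:X\to Y$ such that, for every path $p$ in $X$, the arc length of $p$ equals the arc length of the curve $m(p)$ in $Y$, counted with multiplicity. *)

From HB Require Import structures.
From mathcomp Require Import all_boot all_order all_algebra.
From mathcomp Require Import classical_sets boolp reals ereal constructive_ereal.
Set Implicit Arguments. Unset Strict Implicit. Unset Printing Implicit Defensive.
Import Order.TTheory GRing.Theory Num.Theory.
Local Open Scope ring_scope.

(** A finite simple graph is given by a finType [V] and a symmetric
    irreflexive relation [adj].  Its metric graph has as points the vertices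
    and the interior points of the edges.  An interior point of the edge
    {u,v} is represented canonically as [MInner u v t] with
    [enum_rank u < enum_rank v] and [0 < t < 1], [t] being the distance to
    [u] along the edge (the edge is a segment of length 1). *)

Section MetricGraph.
Variables (V : finType) (adj : rel V) (R : realType).

Inductive mgpt := MVert of V | MInner of V & V & R.

Definition mg_valid (p : mgpt) : bool :=
  match p with
  | MVert _ => true
  | MInner u v t => [&& adj u v, (enum_rank u < enum_rank v)%N, 0 < t & t < 1]
  end.

Definition mgpoint := {p : mgpt | mg_valid p}.

Definition walk_len (n : nat) (u v : V) : bool :=
  [exists s : n.-tuple V, path adj u s && (last u s == v)].

(** combinatorial graph distance (#|V| if not connected) *)
Definition gdist (u v : V) : nat :=
  \big[minn/#|V|]_(n < #|V| | walk_len n u v) n.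

Definition mg_ends (p : mgpt) : seq (V * R) :=
  match p with
  | MVert v => [:: (v, 0)]
  | MInner u v t => [:: (u, t); (v, 1 - t)]
  end.

Definition mg_same_edge (p q : mgpt) : seq R :=
  match p, q with
  | MInner u v t, MInner u' v' t' =>
      if (u == u') && (v == v') then [:: `|t - t'|] else [::]
  | _, _ => [::]
  end.

Definition mg_dist_raw (p q : mgpt) : R :=
  let c := [seq a.2 + (gdist a.1 b.1)%:R + b.2 | a <- mg_ends p, b <- mg_ends q]
           ++ mg_same_edge p q in
  foldr Num.min (head 0 c) c.

Definition mg_dist (p q : mgpoint) : R := mg_dist_raw (val p) (val q).

End MetricGraph.

Section Curves.
Variables (R : realType) (T : Type) (d : T -> T -> R).

Definition is_path (g : R -> T) : Prop :=
  forall t, 0 <= t <= 1 -> forall eps : R, 0 < eps ->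
    exists2 delta : R, 0 < delta &
      forall t', 0 <= t' <= 1 -> `|t - t'| < delta -> d (g t) (g t') < eps.

(** arc length of a curve g : [0,1] -> T (sup over partitions), in \bar R;
    traversals are counted with multiplicity. *)
Definition arc_length (g : R -> T) : \bar R :=
  ereal_sup [set x : \bar R | exists (n : nat) (s : nat -> R),
    [/\ s 0%N = 0, s n = 1, (forall i, (i < n)%N -> s i <= s i.+1) &
        x = (\sum_(i < n) d (g (s i)) (g (s i.+1)))%:E]].
End Curves.

Definition isometric_covering (R : realType) (X Y : Type)
  (dX : X -> X -> R) (dY : Y -> Y -> R) (m : X -> Y) : Prop :=
  (forall y, exists x, m x = y) /\
  (forall p : R -> X, is_path dX p -> arc_length dX p = arc_length dY (m \o p)).

(** The icosahedron: vertex 0 (top), upper pentagon 1..5, lower pentagon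
    6..10, vertex 11 (bottom); upper i is joined to lower i+5 and i+4 (cyclically). *)
Definition ico_e (a b : nat) : bool :=
  [|| (a == 0%N) && (1 <= b <= 5)%N,
      (1 <= a <= 4)%N && (b == a.+1), (a == 1%N) && (b == 5%N),
      (6 <= a <= 9)%N && (b == a.+1), (a == 6%N) && (b == 10%N),
      (1 <= a <= 5)%N && (b == a + 5)%N,
      (2 <= a <= 5)%N && (b == a + 4)%N, (a == 1%N) && (b == 10%N)
    | (6 <= a <= 10)%N && (b == 11%N)].

Definition ico_adj : rel 'I_12 := fun u v => ico_e u v || ico_e v u.

Definition cube_adj : rel {ffun 'I_3 -> bool} :=
  fun f g => #|[set k | f k != g k]| == 1%N.

From mathcomp Require Import all_boot all_order all_algebra.
From mathcomp Require Import classical_sets boolp reals ereal constructive_ereal.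
From mathcomp Require Import zify ring lra.
Set Implicit Arguments. Unset Strict Implicit. Unset Printing Implicit Defensive.
Import Order.TTheory GRing.Theory Num.Theory.
Local Open Scope ring_scope.

(* Forgetting the middle coordinate maps the cube onto a square, and sending
   the square's vertices to 0, 1, 2, 3 and extending affinely along edges gives
   a 1-Lipschitz map from the cube's metric graph onto the circle R/4Z.
   Composed with an isometric covering, it yields a map theta from the
   icosahedron's metric graph onto the circle that moves by at most 1 along
   every edge.  The triangles of the icosahedron have perimeter 3 < 4 and
   generate its cycles, so theta lifts along edges to a real function that
   is 1-Lipschitz on edges.  Any two edges of the icosahedron can be matched
   endpoint to endpoint at graph distance at most 2, so the lifted image has
   diameter at most 3 < 4 and cannot meet every class modulo 4. *)

(** * The circle R/4Z *)

Section Circle.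
Variable R : archiRealFieldType.
Implicit Types x y z d : R.

Definition cong4 x y : Prop := exists k : int, x - y = 4 * k%:~R.

Lemma cong4_refl x : cong4 x x.
Proof. by exists 0; rewrite subrr mulr0. Qed.

Lemma cong4_sym x y : cong4 x y -> cong4 y x.
Proof. by case=> k e; exists (- k); rewrite intrN mulrN -e opprB. Qed.

Lemma cong4_trans y x z : cong4 x y -> cong4 y z -> cong4 x z.
Proof.
by case=> k1 e1 [k2 e2]; exists (k1 + k2); rewrite intrD mulrDr -e1 -e2; ring.
Qed.

Lemma cong4D x y x' y' : cong4 x y -> cong4 x' y' -> cong4 (x + x') (y + y').
Proof.
by case=> k1 e1 [k2 e2]; exists (k1 + k2); rewrite intrD mulrDr -e1 -e2; ring.
Qed.

Lemma cong4N x y : cong4 x y -> cong4 (- x) (- y).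
Proof. by case=> k e; exists (- k); rewrite intrN mulrN -e; ring. Qed.

Lemma cong4_eq x y : cong4 x y -> `|x - y| < 4 -> x = y.
Proof.
move=> [k e]; rewrite e ltr_norml => /andP[h1 h2].
have k_gt : ((-1 : int)%:~R : R) < k%:~R by rewrite intrN; lra.
have k_lt : (k%:~R : R) < 1 by lra.
rewrite ltr_int in k_gt; rewrite ltrz1 in k_lt.
have k0 : k = 0 by lia.
by apply/eqP; rewrite -subr_eq0 e k0 mulr0.
Qed.

Definition wrap4 x : R := x - 4 * (Num.floor ((x + 2) / 4))%:~R.

Lemma wrap4_range x : -2 <= wrap4 x < 2.
Proof.
have /andP[lo hi] := floor_itv ((x + 2) / 4); rewrite intrD in hi.
rewrite /wrap4; set k := (Num.floor _)%:~R in lo hi *.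
rewrite ler_pdivlMr // in lo; rewrite ltr_pdivrMr // in hi.
by apply/andP; split; lra.
Qed.

Lemma cong4_wrap4 x : cong4 (wrap4 x) x.
Proof. by exists (- Num.floor ((x + 2) / 4)); rewrite /wrap4 intrN; ring. Qed.

Definition cdiff x y : R := wrap4 (y - x).
Definition cdist x y : R := `|cdiff x y|.

Lemma cong4_cdiff x y : cong4 (cdiff x y) (y - x).
Proof. exact: cong4_wrap4. Qed.

Lemma cong4_addcdiff x y : cong4 (x + cdiff x y) y.
Proof.
have := cong4D (cong4_refl x) (cong4_cdiff x y).
by rewrite [x + (y - x)]addrC subrK.
Qed.

Lemma cdiff_range x y : -2 <= cdiff x y < 2.
Proof. exact: wrap4_range. Qed.

Lemma cdiff_cong x y d : cong4 d (y - x) -> -2 <= d < 2 -> cdiff x y = d.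
Proof.
move=> hd /andP[d1 d2]; have /andP[c1 c2] := cdiff_range x y.
apply: cong4_eq; last by rewrite ltr_norml; apply/andP; split; lra.
exact: cong4_trans (cong4_cdiff x y) (cong4_sym hd).
Qed.

Lemma cdiff_congr x y y' : cong4 y y' -> cdiff x y = cdiff x y'.
Proof.
move=> yy'; apply: cdiff_cong; last exact: cdiff_range.
apply: cong4_trans (cong4_cdiff x y') _.
exact: cong4D (cong4_sym yy') (cong4_refl _).
Qed.

Lemma cdiff_small x y : -2 <= y - x < 2 -> cdiff x y = y - x.
Proof. exact/cdiff_cong/cong4_refl. Qed.

Lemma cdiffxx x : cdiff x x = 0.
Proof. by rewrite cdiff_small subrr //; apply/andP; split; lra. Qed.

Lemma cdiffN x y : cdist x y < 2 -> cdiff y x = - cdiff x y.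
Proof.
rewrite /cdist ltr_norml => /andP[h1 h2]; apply: cdiff_cong.
  by rewrite -[x - y]opprB; apply/cong4N/cong4_cdiff.
by apply/andP; split; lra.
Qed.

Lemma cdiffD x y z : cdist x y + cdist y z < 2 ->
  cdiff x z = cdiff x y + cdiff y z.
Proof.
rewrite /cdist => h; apply: cdiff_cong.
  have -> : z - x = (y - x) + (z - y) by ring.
  exact: cong4D (cong4_cdiff x y) (cong4_cdiff y z).
have := ler_normD (cdiff x y) (cdiff y z).
by rewrite ler_norml => /andP[] /= *; lra.
Qed.

Lemma cdist_small x y : -2 <= y - x < 2 -> cdist x y = `|y - x|.
Proof. by move=> ?; rewrite /cdist cdiff_small. Qed.

Lemma cdist_congr x y y' : cong4 y y' -> cdist x y = cdist x y'.
Proof. by move=> yy'; rewrite /cdist (cdiff_congr _ yy'). Qed.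

Lemma cdistD2l x a b : -2 <= b - a < 2 -> cdist (x + a) (x + b) = `|b - a|.
Proof.
have -> : b - a = x + b - (x + a) by ring.
exact: cdist_small.
Qed.

Lemma cdistxx x : cdist x x = 0.
Proof. by rewrite /cdist cdiffxx normr0. Qed.

Lemma cdist_le2 x y : cdist x y <= 2.
Proof.
have /andP[h1 h2] := cdiff_range x y.
by rewrite /cdist ler_norml; apply/andP; split; lra.
Qed.

Lemma cdistC x y : cdist y x = cdist x y.
Proof.
have [lt2|ge2] := ltP (cdist x y) 2; first by rewrite /cdist cdiffN // normrN.
have /andP[h1 h2] := cdiff_range x y.
have exy : cdiff x y = -2 by move: ge2; rewrite /cdist ler_normr => /orP[]; lra.
rewrite /cdist exy; suff -> : cdiff y x = -2 by [].
apply: cdiff_cong; last by apply/andP; split; lra.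
apply: (@cong4_trans 2); first by exists (-1); rewrite intrN mulrN mulr1; ring.
by rewrite -[x - y]opprB -[2]opprK -exy; apply/cong4N/cong4_cdiff.
Qed.

Lemma cdist_triangle x y z : cdist x z <= cdist x y + cdist y z.
Proof.
have [lt2|ge2] := ltP (cdist x y + cdist y z) 2.
  by rewrite /cdist (cdiffD lt2) ler_normD.
exact: le_trans (cdist_le2 x z) ge2.
Qed.

End Circle.

(** * Metric graphs *)

Section GraphDistance.
Variables (V : finType) (adj : rel V).

Lemma gdist_le_walk n u v : (n < #|V|)%N -> walk_len adj n u v ->
  (gdist adj u v <= n)%N.
Proof. by move=> ltnV w; exact: (@bigmin_le_cond _ nat _ _ (Ordinal ltnV)). Qed.

Lemma gdistxx u : gdist adj u u = 0%N.
Proof.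
apply/eqP; rewrite -leqn0; apply: gdist_le_walk; first by apply/card_gt0P; exists u.
by apply/existsP; exists [tuple]; rewrite /= eqxx.
Qed.

Lemma gdist_le1 u v : adj u v -> (gdist adj u v <= 1)%N.
Proof.
have [<-|neq_uv] := eqVneq u v; first by rewrite gdistxx.
move=> uv; apply: gdist_le_walk; first by apply/card_gt1P; exists u, v.
by apply/existsP; exists [tuple v]; rewrite /= uv eqxx.
Qed.

(* The last hypothesis accounts for the value #|V| that gdist takes on
   unreachable pairs. *)
Lemma le_gdist (R : realFieldType) (rho : V -> V -> R) :
  (forall u, rho u u = 0) -> (forall u v w, rho u w <= rho u v + rho v w) ->
  (forall u v, adj u v -> rho u v <= 1) -> (forall u v, rho u v <= #|V|%:R) ->
  forall u v, rho u v <= (gdist adj u v)%:R.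
Proof.
move=> rho0 rho_tri rho_adj rho_card u v.
have rho_walk s w : path adj w s -> rho w (last w s) <= (size s)%:R.
  elim: s w => [|x s IHs] w /=; first by rewrite rho0.
  case/andP=> wx /IHs; rewrite mulrSr.
  by have := rho_tri w x (last x s); have := rho_adj _ _ wx; lra.
rewrite /gdist; elim/big_ind: _ => //.
- by move=> a b ha hb; rewrite /minn; case: ifP.
- move=> [n /= _] /existsP[s /andP[ps /eqP <-]].
  by have := rho_walk _ _ ps; rewrite size_tuple.
Qed.

End GraphDistance.

Lemma unit_interval_cases (R : realDomainType) (t : R) :
  0 <= t <= 1 -> [\/ t = 0, t = 1 | 0 < t < 1].
Proof.
case/andP=> t0 t1; have [->|t_neq0] := eqVneq t 0; first exact: Or31.
have [->|t_neq1] := eqVneq t 1; first exact: Or32.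
by apply: Or33; rewrite !lt_neqAle eq_sym t_neq0 t_neq1 t0 t1.
Qed.

Section MetricGraph.
Variables (V : finType) (adj : rel V) (R : realType).
Local Notation point := (mgpoint adj R).

Definition mg_vertex (v : V) : point := exist _ (MVert R v) isT.

Lemma mg_dist_le_ends (p q : point) a b :
  a \in mg_ends (val p) -> b \in mg_ends (val q) ->
  mg_dist p q <= a.2 + (gdist adj a.1 b.1)%:R + b.2.
Proof.
move=> ap bq; rewrite /mg_dist /mg_dist_raw foldrE.
apply: (bigmin_inf_seq _ (a.2 + (gdist adj a.1 b.1)%:R + b.2)) => //.
by rewrite mem_cat (allpairs_f (fun a b => a.2 + (gdist adj a.1 b.1)%:R + b.2)).
Qed.

Lemma mg_dist_le_same (p q : point) u v t t' :
  val p = MInner u v t -> val q = MInner u v t' -> mg_dist p q <= `|t - t'|.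
Proof.
move=> ep eq; rewrite /mg_dist /mg_dist_raw foldrE.
apply: (bigmin_inf_seq _ `|t - t'|) => //.
by rewrite mem_cat ep eq /= !eqxx mem_head orbT.
Qed.

Lemma le_mg_dist (X : Type) (rho : X -> X -> R) (phi : mgpt V R -> X) :
  (forall x y, rho x y = rho y x) ->
  (forall x y z, rho x z <= rho x y + rho y z) ->
  (forall u v, rho (phi (MVert R u)) (phi (MVert R v)) <= (gdist adj u v)%:R) ->
  (forall p : point, forall a, a \in mg_ends (val p) ->
     rho (phi (val p)) (phi (MVert R a.1)) <= a.2) ->
  (forall (p q : point) u v t t', val p = MInner u v t -> val q = MInner u v t' ->
     rho (phi (val p)) (phi (val q)) <= `|t - t'|) ->
  forall p q : point, rho (phi (val p)) (phi (val q)) <= mg_dist p q.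
Proof.
move=> rhoC rho_tri rho_vert rho_ends rho_same p q.
rewrite /mg_dist /mg_dist_raw foldrE big_seq.
set c := (_ ++ _).
have rho_c z : z \in c -> rho (phi (val p)) (phi (val q)) <= z.
  rewrite mem_cat => /orP[/allpairsP[[a b] [ap bq ->]] | ].
    have := rho_tri (phi (val p)) (phi (MVert R a.1)) (phi (val q)).
    have := rho_tri (phi (MVert R a.1)) (phi (MVert R b.1)) (phi (val q)).
    have := rho_ends p a ap; have := rho_ends q b bq; have := rho_vert a.1 b.1.
    by rewrite /= (rhoC (phi (sval q))); lra.
  case ep: (val p) => [|u v t] //; case eq: (val q) => [|u' v' t'] //=.
  case: ifP => // /andP[/eqP eu /eqP ev]; rewrite inE => /eqP ->.
  rewrite -eu -ev in eq *.
  by have := rho_same p q u v t t' ep eq; rewrite ep eq.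
apply: le_bigmin => [|z /rho_c //].
apply: rho_c; rewrite /c.
by case: (val p) => [?|? ? ?]; case: (val q) => [?|? ? ?]; rewrite /= mem_head.
Qed.

Hypothesis adj_sym : symmetric adj.
Hypothesis adj_irr : irreflexive adj.

Definition edge_point (u v : V) (t : R) : point :=
  if t <= 0 then mg_vertex u else if 1 <= t then mg_vertex v
  else insubd (mg_vertex u)
    (if (enum_rank u < enum_rank v)%N then MInner u v t else MInner v u (1 - t)).

Lemma edge_point0 u v : edge_point u v 0 = mg_vertex u.
Proof. by rewrite /edge_point lexx. Qed.

Lemma edge_point1 u v : edge_point u v 1 = mg_vertex v.
Proof. by rewrite /edge_point ler10 lexx. Qed.

Lemma val_edge_point u v t : adj u v -> 0 < t < 1 ->
  val (edge_point u v t) =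
    if (enum_rank u < enum_rank v)%N then MInner u v t else MInner v u (1 - t).
Proof.
move=> uv /andP[t0 t1]; rewrite /edge_point (lt_geF t0) (lt_geF t1) insubdK //.
have rank_neq : enum_rank u != enum_rank v.
  by apply: contraTneq uv => /enum_rank_inj ->; rewrite adj_irr.
rewrite unfold_in; case: ifP => [uv_rank|/negbT]; first by rewrite /= uv uv_rank t0 t1.
rewrite -leqNgt leq_eqVlt val_eqE eq_sym (negbTE rank_neq) /= => vu_rank.
by rewrite adj_sym uv vu_rank; apply/and3P; split; lra.
Qed.

Lemma mg_ends_edge_point u v t : adj u v -> 0 <= t <= 1 ->
  (t < 1 -> (u, t) \in mg_ends (val (edge_point u v t))) /\
  (0 < t -> (v, 1 - t) \in mg_ends (val (edge_point u v t))).
Proof.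
move=> uv /unit_interval_cases[->|->|t01].
- by rewrite edge_point0 /= mem_head ltxx.
- by rewrite edge_point1 /= subrr mem_head ltxx.
by rewrite val_edge_point //; case: ifP => _ /=; rewrite !inE ?subKr ?eqxx ?orbT.
Qed.

Lemma edge_point_dist u v a b : adj u v -> 0 <= a <= 1 -> 0 <= b <= 1 ->
  mg_dist (edge_point u v a) (edge_point u v b) <= `|a - b|.
Proof.
move=> uv ha hb.
have [ua va] := mg_ends_edge_point uv ha; have [ub vb] := mg_ends_edge_point uv hb.
have guv : (gdist adj u v)%:R <= 1 :> R by rewrite lern1 gdist_le1.
have gvu : (gdist adj v u)%:R <= 1 :> R by rewrite lern1 gdist_le1 // adj_sym.
have gvv : (gdist adj v v)%:R = 0 :> R by rewrite gdistxx.
have guu : (gdist adj u u)%:R = 0 :> R by rewrite gdistxx.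
have nab : a - b <= `|a - b| /\ b - a <= `|a - b|.
  by rewrite [in X in _ /\ X]distrC !ler_norm.
case/andP: ha hb nab => a0 a1 /andP[b0 b1] [nab nba].
have [/andP[a01 b01]|not_inner] := boolP ((0 < a < 1) && (0 < b < 1)).
  have := val_edge_point uv a01; have := val_edge_point uv b01.
  case: ifP => _ eb ea; first exact: mg_dist_le_same ea eb.
  have -> : `|a - b| = `|(1 - a) - (1 - b)| by rewrite distrC; congr `|_|; ring.
  exact: mg_dist_le_same ea eb.
have [a_lt1|a_ge1] := ltP a 1; have [b_lt1|b_ge1] := ltP b 1.
- apply: le_trans (mg_dist_le_ends (ua a_lt1) (ub b_lt1)) _; rewrite /= guu.
  by move: not_inner; rewrite a_lt1 b_lt1 !andbT negb_and -!leNgt => /orP[] ?; lra.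
- have [a_gt0|a_le0] := ltP 0 a.
    apply: le_trans (mg_dist_le_ends (va a_gt0) (vb _)) _; rewrite /= ?gvv; lra.
  apply: le_trans (mg_dist_le_ends (ua a_lt1) (vb _)) _; rewrite /=; lra.
- have [b_gt0|b_le0] := ltP 0 b.
    apply: le_trans (mg_dist_le_ends (va _) (vb b_gt0)) _; rewrite /= ?gvv; lra.
  apply: le_trans (mg_dist_le_ends (va _) (ub b_lt1)) _; rewrite /=; lra.
apply: le_trans (mg_dist_le_ends (va _) (vb _)) _; rewrite /= ?gvv; lra.
Qed.

Lemma mgpoint_edge (p : point) : (forall v, exists w, adj v w) ->
  exists u v t, [/\ adj u v, 0 <= t <= 1 & p = edge_point u v t].
Proof.
move=> has_nbr; case: p => [[v|u v t] p_valid].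
  have [w vw] := has_nbr v; exists v, w, 0; split; rewrite ?lexx ?ler01 //.
  by rewrite edge_point0; apply: val_inj.
case/and4P: (p_valid) => uv uv_rank t0 t1.
exists u, v, t; split; rewrite ?ltW //.
by apply: val_inj; rewrite val_edge_point ?t0 ?t1 // uv_rank.
Qed.
End MetricGraph.

Arguments mg_vertex {V} adj {R} v.
Arguments edge_point {V} adj {R} u v t.


Lemma partition_in01 (R : realDomainType) (s : nat -> R) n : s 0%N = 0 -> s n = 1 ->
  (forall i, (i < n)%N -> s i <= s i.+1) -> forall i, (i <= n)%N -> 0 <= s i <= 1.
Proof.
move=> s0 sn s_step i i_le_n.
have s_mono : {in [pred i | i <= n]%N &, {homo s : i j / (i <= j)%N >-> i <= j}}.
  apply: homo_leq_in => [x|y x z|j l _|j _].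
  - exact: lexx.
  - exact: le_trans.
  - by rewrite !inE => l_le_n k /andP[_ /ltnW/leq_trans]; apply.
  - by rewrite inE; exact: s_step.
by rewrite -s0 -sn !s_mono ?inE.
Qed.

Section ArcLength.
Variables (R : realType) (T : Type) (d : T -> T -> R) (g : R -> T).

Hypothesis g_lip : forall a b, 0 <= a <= 1 -> 0 <= b <= 1 -> d (g a) (g b) <= `|a - b|.

Lemma arc_length_le1 : (arc_length d g <= 1%:E)%E.
Proof.
apply: ge_ereal_sup => _ [n [s [s0 sn s_step ->]]]; rewrite lee_fin.
have s01 := partition_in01 s0 sn s_step.
apply: le_trans (_ : \sum_(i < n) (s i.+1 - s i) <= 1).
  apply: ler_sum => i _; have i_lt_n := ltn_ord i.
  apply: le_trans (g_lip (s01 _ (ltnW i_lt_n)) (s01 _ i_lt_n)) _.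
  by rewrite distrC ger0_norm ?subr_ge0 ?s_step.
by rewrite -(big_mkord xpredT (fun i => s i.+1 - s i)) telescope_sumr // sn s0 subr0.
Qed.

Lemma lipschitz_is_path : is_path d g.
Proof.
move=> t t01 eps eps_gt0; exists eps => // t' t'01 close.
exact: le_lt_trans (g_lip t01 t'01) close.
Qed.

End ArcLength.

Lemma arc_length_ge_split (R : realType) (T : Type) (d : T -> T -> R) (g : R -> T) t :
  0 <= t <= 1 -> ((d (g 0) (g t) + d (g t) (g 1))%:E <= arc_length d g)%E.
Proof.
move=> /andP[t0 t1]; apply: ereal_sup_ubound.
exists 2%N, (fun i => if i == 0%N then 0 else if i == 1%N then t else 1).
split => //; first by case=> [|[|]].
by rewrite !big_ord_recr big_ord0 /= add0r.
Qed.

Section IsometricCovering.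
Variables (V : finType) (adj : rel V) (R : realType) (Y : Type) (dY : Y -> Y -> R).
Hypotheses (adj_sym : symmetric adj) (adj_irr : irreflexive adj).
Variable m : mgpoint adj R -> Y.
Hypothesis m_cover : isometric_covering (@mg_dist _ adj R) dY m.

Lemma isometric_covering_edge u v s : adj u v -> 0 <= s <= 1 ->
  dY (m (mg_vertex adj u)) (m (edge_point adj u v s)) +
  dY (m (edge_point adj u v s)) (m (mg_vertex adj v)) <= 1.
Proof.
move=> uv s01.
have e_lip (a b : R) : 0 <= a <= 1 -> 0 <= b <= 1 ->
    mg_dist (edge_point adj u v a) (edge_point adj u v b) <= `|a - b|.
  exact: edge_point_dist.
have := arc_length_ge_split dY (m \o edge_point adj u v) s01.
rewrite -(m_cover.2 _ (lipschitz_is_path e_lip)) /= edge_point0 edge_point1 => le_arc.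
by rewrite -lee_fin (le_trans le_arc (arc_length_le1 e_lip)).
Qed.

End IsometricCovering.

(** * Circle-valued maps on metric graphs *)

Section CircleExtension.
Variables (V : finType) (adj : rel V) (R : realType).
Hypotheses (adj_sym : symmetric adj) (adj_irr : irreflexive adj).
Variable h : V -> R.
Hypothesis h_lip : forall u v, adj u v -> cdist (h u) (h v) <= 1.

Definition circle_ext (p : mgpt V R) : R :=
  match p with
  | MVert v => h v
  | MInner u v t => h u + t * cdiff (h u) (h v)
  end.

Lemma cdist_along_edge u v s s' : adj u v -> `|s - s'| <= 1 ->
  cdist (h u + s * cdiff (h u) (h v)) (h u + s' * cdiff (h u) (h v)) <= `|s - s'|.
Proof.
move=> uv ss'.
have scale : `|s' * cdiff (h u) (h v) - s * cdiff (h u) (h v)| <= `|s - s'|.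
  by rewrite -mulrBl normrM distrC -[leRHS]mulr1 ler_wpM2l // h_lip.
rewrite cdistD2l //; have := le_trans scale ss'.
by rewrite ler_norml => /andP[? ?]; apply/andP; split; lra.
Qed.

Lemma circle_ext_ends (p : mgpoint adj R) a : a \in mg_ends (val p) ->
  cdist (circle_ext (val p)) (h a.1) <= a.2.
Proof.
case: p => [[v|u v t] /= p_valid].
  by rewrite inE => /eqP -> /=; rewrite cdistxx.
case/and4P: p_valid => uv _ t0 t1.
have dist0 : `|t - 0| <= 1 by rewrite subr0 ger0_norm ltW.
have dist1 : `|t - 1| <= 1 by rewrite ler_norml; apply/andP; split; lra.
rewrite !inE => /orP[] /eqP -> /=.
  by have := cdist_along_edge uv dist0; rewrite mul0r addr0 subr0 ger0_norm // ltW.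
rewrite (cdist_congr _ (cong4_sym (cong4_addcdiff (h u) (h v)))).
have := cdist_along_edge uv dist1.
by rewrite mul1r distrC ger0_norm // subr_ge0 ltW.
Qed.

Lemma circle_ext_lipschitz (p q : mgpoint adj R) :
  cdist (circle_ext (val p)) (circle_ext (val q)) <= mg_dist p q.
Proof.
apply: (le_mg_dist (rho := @cdist R)).
- by move=> x y; rewrite cdistC.
- exact: cdist_triangle.
- apply: (le_gdist (rho := fun u v => cdist (h u) (h v))) => [w|x y z|//|x y].
  + by rewrite cdistxx.
  + exact: cdist_triangle.
  + have [<-|xy] := eqVneq x y; first by rewrite cdistxx.
    apply: le_trans (cdist_le2 _ _) _; rewrite (ler_nat R 2).
    by apply/card_gt1P; exists x, y.
- exact: circle_ext_ends.
- move=> p' q' u v t t' ep eq; rewrite ep eq /=.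
  have /and4P[uv _ t0 t1] : mg_valid adj (MInner u v t) by rewrite -ep; exact: valP.
  have /and4P[_ _ t0' t1'] : mg_valid adj (MInner u v t') by rewrite -eq; exact: valP.
  by apply: cdist_along_edge uv _; rewrite ler_norml; apply/andP; split; lra.
Qed.

Lemma circle_ext_edge_point u v t : adj u v -> 0 <= t <= 1 ->
  cong4 (circle_ext (val (edge_point adj u v t))) (h u + t * cdiff (h u) (h v)).
Proof.
move=> uv /unit_interval_cases[->|->|t01].
- by rewrite edge_point0 mul0r addr0; exact: cong4_refl.
- by rewrite edge_point1 mul1r; exact/cong4_sym/cong4_addcdiff.
rewrite val_edge_point //; case: ifP => _ /=; first exact: cong4_refl.
rewrite cdiffN; last by apply: le_lt_trans (h_lip uv) _; lra.
have := cong4D (cong4_sym (cong4_addcdiff (h u) (h v)))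
  (cong4_refl ((1 - t) * - cdiff (h u) (h v))).
by congr cong4; ring.
Qed.

Lemma circle_ext_onto (c : nat -> V) :
  (forall i, (i < 4)%N -> [/\ adj (c i) (c i.+1), cong4 (h (c i)) i%:R &
                            cdiff (h (c i)) (h (c i.+1)) = 1]) ->
  forall r, exists p : mgpoint adj R, cong4 (circle_ext (val p)) r.
Proof.
move=> c_square r; pose x := wrap4 (r - 2) + 2.
have x_r : cong4 x r by have := cong4D (cong4_wrap4 (r - 2)) (cong4_refl 2); rewrite subrK.
have /andP[x0 x4] : 0 <= x < 4.
  by have /andP[? ?] := wrap4_range (r - 2); apply/andP; split; rewrite /x; lra.
have [i [i_lt4 /andP[ix xi]]] : exists i, (i < 4)%N /\ i%:R <= x < i%:R + 1.
  have [x1|x1] := ltP x 1; first by exists 0%N; split => //; apply/andP; split; lra.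
  have [x2|x2] := ltP x 2; first by exists 1%N; split => //; apply/andP; split; lra.
  have [x3|x3] := ltP x 3; first by exists 2%N; split => //; apply/andP; split; lra.
  by exists 3%N; split => //; apply/andP; split; lra.
have [uv ci step] := c_square i i_lt4.
exists (edge_point adj (c i) (c i.+1) (x - i%:R)).
apply: cong4_trans (circle_ext_edge_point uv _) _; first by apply/andP; split; lra.
rewrite step mulr1; apply: cong4_trans x_r.
by have := cong4D ci (cong4_refl (x - i%:R)); rewrite [i%:R + _]addrC subrK.
Qed.
End CircleExtension.

(** * Lifting circle-valued maps to the line *)

(* One round of triangle completion: besides the reversed pairs, add the third
   side (b, c) of every triangle whose sides (a, b) and (a, c) are present. *)
Definition tri_close (T : eqType) (e : rel T) (E : seq (T * T)) : seq (T * T) :=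
  undup (E ++ [seq (x.2, x.1) | x <- E] ++
         [seq (x.2, y.2) | x <- E, y <- [seq y <- E | (x.1 == y.1) && e x.2 y.2]]).

Section CircleLift.
Variables (R : archiRealFieldType) (e : rel nat) (T : nat -> R) (par : nat -> nat).
Hypothesis e_sym : symmetric e.
Hypothesis T_lip : forall a b, e a b -> cdist (T a) (T b) <= 1.
Hypothesis par_lt : forall v, (0 < v)%N -> (par v < v)%N.

(* Lift of T along the tree of parent pointers par, with fuel k; the fuel
   v.+1 used by circle_lift suffices because par decreases. *)
Fixpoint tree_lift (k v : nat) : R :=
  if k is k'.+1 then
    if v is 0%N then T 0 else tree_lift k' (par v) + cdiff (T (par v)) (T v)
  else T v.

Definition circle_lift (v : nat) : R := tree_lift v.+1 v.

Lemma tree_liftSS k v :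
  tree_lift k.+1 v.+1 = tree_lift k (par v.+1) + cdiff (T (par v.+1)) (T v.+1).
Proof. by []. Qed.

Lemma tree_liftS k v : (v < k)%N -> tree_lift k.+1 v = tree_lift k v.
Proof.
elim: k v => // k IHk [//|v] v_lt.
by rewrite !tree_liftSS IHk //; exact: leq_ltn_trans (par_lt _) v_lt.
Qed.

Lemma tree_liftE k v : (v < k)%N -> tree_lift k v = circle_lift v.
Proof.
elim: k => // k IHk; rewrite ltnS leq_eqVlt => /orP[/eqP -> //|v_lt].
by rewrite tree_liftS // IHk.
Qed.

Lemma circle_lift_par v : (0 < v)%N ->
  circle_lift v = circle_lift (par v) + cdiff (T (par v)) (T v).
Proof. by case: v => // v _; rewrite /circle_lift tree_liftSS tree_liftE // par_lt. Qed.

Lemma cong4_circle_lift v : cong4 (circle_lift v) (T v).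
Proof.
elim/ltn_ind: v => -[_|v IHv]; first exact: cong4_refl.
rewrite circle_lift_par //; apply: cong4_trans (cong4_addcdiff (T (par v.+1)) _).
exact/cong4D/cong4_refl/IHv/par_lt.
Qed.

Definition lifts_edge a b : Prop := circle_lift b - circle_lift a = cdiff (T a) (T b).

Lemma lifts_edge_sym a b : e a b -> lifts_edge a b -> lifts_edge b a.
Proof.
move=> ab lab; rewrite /lifts_edge cdiffN -?lab; first by ring.
by apply: le_lt_trans (T_lip ab) _; lra.
Qed.

Lemma lifts_edge_tri a b c : e a b -> e a c -> e b c ->
  lifts_edge a b -> lifts_edge a c -> lifts_edge b c.
Proof.
move=> ab ac bc lab lac; rewrite /lifts_edge.
have -> : circle_lift c - circle_lift b = cdiff (T a) (T c) - cdiff (T a) (T b).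
  by rewrite -lab -lac; ring.
apply/esym/cong4_eq.
  apply: cong4_trans (cong4_cdiff _ _) _.
  have := cong4D (cong4_cdiff (T a) (T c)) (cong4N (cong4_cdiff (T a) (T b))).
  by move/cong4_sym; congr cong4; ring.
have := T_lip ab; have := T_lip ac; have := T_lip bc; rewrite /cdist !ler_norml.
by move=> /andP[? ?] /andP[? ?] /andP[? ?]; rewrite ltr_norml; apply/andP; split; lra.
Qed.

Lemma lifts_edge_tri_close (E : seq (nat * nat)) :
  (forall x, x \in E -> e x.1 x.2 /\ lifts_edge x.1 x.2) ->
  forall x, x \in tri_close e E -> e x.1 x.2 /\ lifts_edge x.1 x.2.
Proof.
move=> E_ok x; rewrite mem_undup !mem_cat => /or3P[/E_ok // | | ].
  case/mapP=> y /E_ok[y12 ly] ->; rewrite /= e_sym.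
  by split=> //; apply: lifts_edge_sym.
case/allpairsPdep=> y [z] [/E_ok[y12 ly]]; rewrite mem_filter => /andP[/andP[/eqP yz1 e22]].
move=> /E_ok[z12 lz] ->; split=> //=.
by apply: lifts_edge_tri e22 ly _ => //; rewrite yz1.
Qed.

Lemma lifts_edge_closure (vs : seq nat) k :
  all (fun v => (0 < v)%N && e (par v) v) vs ->
  forall x, x \in iter k (tri_close e) [seq (par v, v) | v <- vs] ->
  e x.1 x.2 /\ lifts_edge x.1 x.2.
Proof.
move=> /allP tree_ok; elim: k => [|k IHk] x; last exact: lifts_edge_tri_close.
case/mapP=> v /tree_ok /andP[v_gt0 ev] -> /=; split=> //.
by rewrite /lifts_edge (circle_lift_par v_gt0); ring.
Qed.
End CircleLift.

Lemma not_onto_of_diam3 (R : archiRealFieldType) (P : R -> Prop) :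
  (forall y y', P y -> P y' -> `|y - y'| <= 3) -> ~ (forall r, exists2 y, P y & cong4 y r).
Proof.
move=> diam onto.
(* Lifts of the five classes 4i/5 would be 4/5 apart in turn, spanning 16/5. *)
have step y y' r : P y -> P y' -> cong4 y r -> cong4 y' (r + 4 / 5) -> y' - y = 4 / 5.
  move=> Py Py' yr yr'; apply: cong4_eq.
    by have := cong4D yr' (cong4N yr); congr cong4; ring.
  have := diam _ _ Py Py'; rewrite ler_norml ltr_norml => /andP[? ?].
  by apply/andP; split; lra.
have [y0 P0 c0] := onto 0; have [y1 P1 c1] := onto (0 + 4 / 5).
have [y2 P2 c2] := onto (0 + 4 / 5 + 4 / 5).
have [y3 P3 c3] := onto (0 + 4 / 5 + 4 / 5 + 4 / 5).
have [y4 P4 c4] := onto (0 + 4 / 5 + 4 / 5 + 4 / 5 + 4 / 5).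
have := step _ _ _ P0 P1 c0 c1; have := step _ _ _ P1 P2 c1 c2.
have := step _ _ _ P2 P3 c2 c3; have := step _ _ _ P3 P4 c3 c4.
by have := diam _ _ P4 P0; rewrite ler_norml => /andP[? ?]; lra.
Qed.

Section GraphWithin.
Variables (e : rel nat) (vs : seq nat).

Fixpoint within (k a c : nat) : bool :=
  if k is k'.+1 then within k' a c || has (fun b => e a b && within k' b c) vs
  else a == c.

Definition within_pairs k : seq (nat * nat) :=
  [seq x <- [seq (a, c) | a <- vs, c <- vs] | within k x.1 x.2].

(* Any two edges can be matched endpoint to endpoint with both matched pairs
   within distance 2; the two routes through the matching between points of
   the edges then have total length at most 6. *)
Definition edge_diam3 : bool :=
  let W := within_pairs 2 in
  let E := [seq x <- [seq (a, b) | a <- vs, b <- vs] | e x.1 x.2] in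
  all (fun x => all (fun y =>
    ((x.1, y.1) \in W) && ((x.2, y.2) \in W) || ((x.1, y.2) \in W) && ((x.2, y.1) \in W))
    E) E.

Variables (R : realFieldType) (f : nat -> R).
Hypothesis f_lip : forall a b, e a b -> `|f a - f b| <= 1.

Lemma within_lip k a c : within k a c -> `|f a - f c| <= k%:R.
Proof.
elim: k a c => [|k IHk] a c /=; first by move/eqP ->; rewrite subrr normr0.
case/orP=> [/IHk|/hasP[b _ /andP[/f_lip ab /IHk bc]]]; rewrite mulrSr.
  by move=> ?; lra.
by have := ler_distD (f b) (f a) (f c); lra.
Qed.

Lemma edge_diam3_dist a b c d y y' : edge_diam3 ->
  a \in vs -> b \in vs -> c \in vs -> d \in vs -> e a b -> e c d ->
  `|y - f a| + `|y - f b| <= 1 -> `|y' - f c| + `|y' - f d| <= 1 -> `|y - y'| <= 3.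
Proof.
move=> cert av bv cv dv ab cd.
have nb (x : R) : x <= `|x| /\ - x <= `|x|.
  by split; [exact: ler_norm | rewrite -normrN; exact: ler_norm].
have [? ?] := nb (y - f a); have [? ?] := nb (y - f b).
have [? ?] := nb (y' - f c); have [? ?] := nb (y' - f d).
have W x z : (x, z) \in within_pairs 2 -> f x - f z <= 2 /\ f z - f x <= 2.
  by rewrite mem_filter => /andP[/within_lip]; rewrite ler_norml => /andP[? ?]; split; lra.
have E x z : e x z -> x \in vs -> z \in vs ->
    (x, z) \in [seq x <- [seq (a, b) | a <- vs, b <- vs] | e x.1 x.2].
  by move=> xz xv zv; rewrite mem_filter xz (allpairs_f pair).
move: cert => /allP/(_ _ (E _ _ ab av bv))/allP/(_ _ (E _ _ cd cv dv)).
rewrite ler_norml => /orP[/andP[/W[? ?] /W[? ?]]|/andP[/W[? ?] /W[? ?]]] ? ?;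
  by apply/andP; split; lra.
Qed.

End GraphWithin.

(** * The cube and the icosahedron *)

(* Position of (f 0, f 2) on the square 00, 10, 11, 01. *)
Definition square_index (f : {ffun 'I_3 -> bool}) : nat :=
  if f ord0 then (if f ord_max then 2 else 1) else (if f ord_max then 3 else 0).

Lemma square_index_lt4 f : (square_index f < 4)%N.
Proof. by rewrite /square_index; case: (f ord0); case: (f ord_max). Qed.

Definition square_near (i j : nat) := [|| j == i, j == i.+1 %% 4 | i == j.+1 %% 4]%N.

Lemma cube_adj_square_near u v :
  cube_adj u v -> square_near (square_index u) (square_index v).
Proof.
move=> uv; have : (u ord0 == v ord0) || (u ord_max == v ord_max).
  apply: contraLR uv => /norP[d0 d2].
  suff : (1 < #|[set k | u k != v k]|)%N by rewrite /cube_adj; case: #|_| => [|[|]].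
  by apply/card_gt1P; exists ord0, ord_max; rewrite !inE d0 d2.
by rewrite /square_index; case: (u ord0) (u ord_max) (v ord0) (v ord_max) => [] [] [] [].
Qed.

Lemma cdiff_square_step (R : archiRealFieldType) i :
  (i < 4)%N -> cdiff (i%:R : R) (i.+1 %% 4)%N%:R = 1.
Proof.
move=> i_lt4; apply: cdiff_cong; last by apply/andP; split; lra.
have [i_lt3|->] : (i < 3)%N \/ i = 3%N by lia.
  by rewrite modn_small // -natrB // subSnn; exact: cong4_refl.
by rewrite modnn; exists 1; rewrite mulr1; lra.
Qed.

Lemma cdist_square_near (R : archiRealFieldType) i j : (i < 4)%N -> (j < 4)%N ->
  square_near i j -> cdist (i%:R : R) j%:R <= 1.
Proof.
move=> i_lt4 j_lt4 /or3P[] /eqP ->; first by rewrite cdistxx.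
  by rewrite /cdist cdiff_square_step // normr1.
by rewrite cdistC /cdist cdiff_square_step // normr1.
Qed.

Definition square_cycle (i : nat) : {ffun 'I_3 -> bool} :=
  [ffun k => if k == ord0 then (i %% 4 == 1) || (i %% 4 == 2)
             else (k == ord_max) && ((i %% 4 == 2) || (i %% 4 == 3))]%N.

Lemma square_index_cycle i : square_index (square_cycle i) = (i %% 4)%N.
Proof.
rewrite /square_index !ffunE /=.
have : (i %% 4 < 4)%N by rewrite ltn_pmod.
by case: (i %% 4)%N => [|[|[|[|]]]].
Qed.

Lemma cube_adj_at (f g : {ffun 'I_3 -> bool}) (k0 : 'I_3) :
  (forall k, (f k != g k) = (k == k0)) -> cube_adj f g.
Proof.
move=> fg; rewrite /cube_adj (_ : [set k | _] = [set k0]) ?cards1 //.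
by apply/setP => k; rewrite !inE fg.
Qed.

Lemma cube_adj_cycle i : (i < 4)%N -> cube_adj (square_cycle i) (square_cycle i.+1).
Proof.
move=> i_lt4; apply: (cube_adj_at (k0 := if odd i then ord_max else ord0)) => k.
by rewrite !ffunE; case: i i_lt4 => [|[|[|[|]]]] //= _; case: k => [[|[|[|]]] ?].
Qed.

Lemma cube_adj_sym : symmetric cube_adj.
Proof.
move=> f g; rewrite /cube_adj (_ : [set k | f k != g k] = [set k | g k != f k]) //.
by apply/setP => k; rewrite !inE eq_sym.
Qed.

Lemma cube_adj_irr : irreflexive cube_adj.
Proof.
by move=> f; rewrite /cube_adj cardsE eq_card0 // => k; rewrite unfold_in /= eqxx.
Qed.

Section CubeCircle.
Variable R : realType.

Definition cube_angle (f : {ffun 'I_3 -> bool}) : R := (square_index f)%:R.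

Lemma cube_angle_lip u v : cube_adj u v -> cdist (cube_angle u) (cube_angle v) <= 1.
Proof. by move/cube_adj_square_near; apply: cdist_square_near; exact: square_index_lt4. Qed.

Lemma cube_circle_onto r :
  exists p : mgpoint cube_adj R, cong4 (circle_ext cube_angle (val p)) r.
Proof.
apply: (circle_ext_onto cube_adj_sym cube_adj_irr cube_angle_lip (c := square_cycle)).
move=> i i_lt4; rewrite /cube_angle !square_index_cycle modn_small //.
by split; [exact: cube_adj_cycle | exact: cong4_refl | exact: cdiff_square_step].
Qed.

End CubeCircle.

Definition ico_graph : rel nat := fun a b => ico_e a b || ico_e b a.

(* A spanning tree of the icosahedron rooted at its top vertex 0. *)
Definition ico_par (v : nat) : nat :=
  if (v <= 5)%N then 0 else if (v <= 10)%N then (v - 5)%N else 6.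

Lemma ico_graph_sym : symmetric ico_graph.
Proof. by move=> a b; rewrite /ico_graph orbC. Qed.

Lemma ico_e_lt a b : ico_e a b -> (a < 12)%N && (b < 12)%N.
Proof. rewrite /ico_e; lia. Qed.

Lemma ico_graph_lt a b : ico_graph a b -> (a < 12)%N && (b < 12)%N.
Proof. by case/orP=> /ico_e_lt //; rewrite andbC. Qed.

Lemma ico_par_lt v : (0 < v)%N -> (ico_par v < v)%N.
Proof. by rewrite /ico_par; case: ifP => v5; [|case: ifP => v10]; lia. Qed.

Notation ico_closure :=
  (iter 5 (tri_close ico_graph) [seq (ico_par v, v) | v <- iota 1 11]).

Lemma ico_tree_ok : all (fun v => (0 < v)%N && ico_graph (ico_par v) v) (iota 1 11).
Proof. by []. Qed.

Lemma ico_closure_complete :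
  all (fun a => all (fun b => ico_graph a b ==> ((a, b) \in ico_closure)) (iota 0 12))
      (iota 0 12).
Proof. by vm_compute. Qed.

Lemma ico_diam3 : edge_diam3 ico_graph (iota 0 12).
Proof. by vm_compute. Qed.

Lemma ico_adj_sym : symmetric ico_adj.
Proof. by move=> a b; exact: ico_graph_sym. Qed.

Lemma ico_adj_irr : irreflexive ico_adj.
Proof.
have irr : all (fun a => ~~ ico_graph a a) (iota 0 12) by [].
by move=> a; apply/negbTE/(allP irr); rewrite mem_iota ltn_ord.
Qed.

Lemma ico_tree_edge v : (0 < v < 12)%N -> ico_graph (ico_par v) v.
Proof.
move=> /andP[v_gt0 v_lt12]; have v_in : v \in iota 1 11 by rewrite mem_iota; lia.
by have /andP[] := allP ico_tree_ok v v_in.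
Qed.

Lemma ico_has_nbr (v : 'I_12) : exists w, ico_adj v w.
Proof.
have [v0|v_gt0] := posnP v.
  by exists (inord 1); rewrite /ico_adj inordK // v0; exact: (ico_tree_edge (v := 1)).
have pv : ico_graph (ico_par v) v by apply: ico_tree_edge; rewrite v_gt0 ltn_ord.
have /andP[pv_lt12 _] := ico_graph_lt pv.
by exists (inord (ico_par v)); rewrite /ico_adj inordK // -/(ico_graph _ _) ico_graph_sym.
Qed.

Section IcosahedronCircle.
Variables (R : realType) (theta : mgpoint ico_adj R -> R).
Hypothesis theta_edge : forall (a b : 'I_12) s, ico_adj a b -> 0 <= s <= 1 ->
  cdist (theta (mg_vertex ico_adj a)) (theta (edge_point ico_adj a b s)) +
  cdist (theta (edge_point ico_adj a b s)) (theta (mg_vertex ico_adj b)) <= 1.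

Let T (n : nat) : R := theta (mg_vertex ico_adj (inord n)).

Let T_val (a : 'I_12) : T a = theta (mg_vertex ico_adj a).
Proof. by rewrite /T inord_val. Qed.

Lemma ico_vertex_lip a b : ico_graph a b -> cdist (T a) (T b) <= 1.
Proof.
move=> ab; have /andP[a12 b12] := ico_graph_lt ab.
have ab' : ico_adj (inord a) (inord b) by rewrite /ico_adj !inordK.
have := theta_edge ab' (s := 1); rewrite edge_point1 cdistxx addr0; apply.
by rewrite ler01 lexx.
Qed.

Let ell := circle_lift T ico_par.

Lemma ico_lift_edge a b : ico_graph a b -> ell b - ell a = cdiff (T a) (T b).
Proof.
move=> ab; have /andP[a12 b12] := ico_graph_lt ab.
have in_closure : (a, b) \in ico_closure.
  move: ico_closure_complete => /allP/(_ a)/[!mem_iota]/(_ a12)/allP/(_ b)/[!mem_iota].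
  by move=> /(_ b12)/implyP; apply.
by have [] := lifts_edge_closure ico_graph_sym ico_vertex_lip ico_par_lt ico_tree_ok in_closure.
Qed.

Lemma ico_lift_lip a b : ico_graph a b -> `|ell a - ell b| <= 1.
Proof. by move=> ab; rewrite distrC ico_lift_edge //; exact: ico_vertex_lip. Qed.

Lemma ico_point_lift (w : mgpoint ico_adj R) : exists a b y,
  [/\ ico_graph a b, cong4 y (theta w) & `|y - ell a| + `|y - ell b| <= 1].
Proof.
have [u [v [t [uv t01 ->]]]] := mgpoint_edge ico_adj_sym ico_adj_irr w ico_has_nbr.
have := theta_edge uv t01; rewrite -!T_val; set x := theta _ => edge_bd.
have ev : ell v = ell u + cdiff (T u) x + cdiff x (T v).
  by rewrite -addrA -cdiffD ?(ltr_pwDr _ edge_bd) //; have := ico_lift_edge uv; lra.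
exists u, v, (ell u + cdiff (T u) x); split => //.
  apply: cong4_trans (cong4_addcdiff (T u) x).
  exact: cong4D (cong4_circle_lift T ico_par_lt u) (cong4_refl _).
rewrite ev (_ : ell u + _ - ell u = cdiff (T u) x); last by ring.
by rewrite (_ : _ - _ = - cdiff x (T v)) ?normrN //; ring.
Qed.

Lemma ico_circle_not_onto : ~ (forall r, exists w, cong4 (theta w) r).
Proof.
move=> onto.
pose P y := exists a b, ico_graph a b /\ `|y - ell a| + `|y - ell b| <= 1.
apply: (@not_onto_of_diam3 _ P).
  move=> y y' [a [b [ab hy]]] [c [d [cd hy']]].
  have /andP[a12 b12] := ico_graph_lt ab; have /andP[c12 d12] := ico_graph_lt cd.
  by apply: (edge_diam3_dist ico_lift_lip ico_diam3 _ _ _ _ ab cd hy hy'); rewrite mem_iota.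
move=> r; have [w wr] := onto r; have [a [b [y [ab yw hy]]]] := ico_point_lift w.
by exists y; [exists a, b | exact: cong4_trans yw wr].
Qed.

End IcosahedronCircle.

Theorem theorem2 (R : realType) :
  ~ exists m : mgpoint ico_adj R -> mgpoint cube_adj R,
      isometric_covering (@mg_dist _ ico_adj R) (@mg_dist _ cube_adj R) m.
Proof.
case=> m m_cover.
pose theta w := circle_ext (@cube_angle R) (val (m w)).
apply: (@ico_circle_not_onto R theta).
  move=> a b s ab s01.
  have := isometric_covering_edge ico_adj_sym ico_adj_irr m_cover ab s01.
  have lip := circle_ext_lipschitz (@cube_angle_lip R).
  by have := lip (m (mg_vertex ico_adj a)) (m (edge_point ico_adj a b s));
     have := lip (m (edge_point ico_adj a b s)) (m (mg_vertex ico_adj b)); lra.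
move=> r; have [z zr] := cube_circle_onto r.
by have [w mwz] := m_cover.1 z; exists w; rewrite /theta mwz.
Qed.
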